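(* Let $V$ be a fixed real-valued score function, $X_1,\dots,X_{n+1}\in\mathbb R^p$, calibration scores $V_1\le V_2\le\dots\le V_n$ (indexed in increasing order), and $H:\mathbb R^p\times\mathbb R^p\to[0,1]$ a localizer with $H(x,x)=1$; put $H_{ij}=H(X_i,X_j)$ and $p^H_{ij}=H_{ij}/\sum_{k=1}^{n+1}H_{ik}$. For $v\in\mathbb R\cup\{\pm\infty\}$ let $\hat{\mathcal F}_i(v)=\sum_{j=1}^{n}p^H_{ij}\delta_{V_j}+p^H_{i,n+1}\delta_v$, and $\hat{\mathcal F}=\sum_{j=1}^np^H_{n+1,j}\delta_{V_j}+p^H_{n+1,n+1}\delta_{+\infty}$. Fix $\alpha\in(0,1)$, let $\Gamma=\{\sum_{k\in I}p^H_{ik}: i\in\{1,\dots,n+1\},\ I\subseteq\{1,\dots,n+1\}\}$, and for each $v$ let $\tilde\alpha(v)$ be the smallest $\tilde\alpha\in\Gamma$ with $\frac{1}{n+1}\sum_{i=1}^{n+1}\mathbb 1\{V_i\le Q(\tilde\alpha;\hat{\mathcal F}_i(v))\}\ge\alpha$ (with $V_{n+1}=v$ in this sum); set $C_V(X_{n+1})=\{v: v\le Q(\tilde\alpha(v);\hat{\mathcal F})\}$. Let $\overline V_0=-\infty$, $\overline V_i=V_i$ for $1\le i\le n$, $\overline V_{n+1}=+\infty$. For $i=1,\dots,n+1$ let $\ell(i)=\max\{i'\in\{1,\dots,n\}: V_{i'}<\overline V_i\}$ (with $\max\emptyset=0$), $\theta_i=\sum_{j=1}^{\ell(i)}p^H_{ij}$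 and $\tilde\theta_i=\sum_{j=1}^{\ell(i)}p^H_{n+1,j}$ (both $0$ if $\ell(i)=0$). For $k=1,\dots,n+1$ let $$S(k)=\frac{1}{n+1}\sum_{i=1}^{n}\mathbb 1\{V_i\le Q(\tilde\theta_k;\hat{\mathcal F}_i(\overline V_{\ell(k)}))\}.$$ Then: 1. If $k^*$ is the largest index $k\in\{1,\dots,n+1\}$ with $S(k)<\alpha$, then $\{v: v\le\overline V_{k^*}\}$ is the closure of $C_V(X_{n+1})$. 2. Partition the calibration indices $\{1,\dots,n\}$ into $A_1=\{i:p^H_{i,n+1}+\theta_i<\tilde\theta_i\}$, $A_2=\{i:\theta_i\ge\tilde\theta_i\}$, $A_3=\{i: p^H_{i,n+1}+\theta_i\ge\tilde\theta_i,\ \theta_i<\tilde\theta_i\}$. Then for every $k=1,\dots,n+1$, $$S(k)=\frac{1}{n+1}\Big(\sum_{i\in A_1}\mathbb 1\{\theta_i+p^H_{i,n+1}<\tilde\theta_k\}+\sum_{i\in A_2}\mathbb 1\{\theta_i<\tilde\theta_k\}+\sum_{i\in A_3}\mathbb 1\{\ell(i)<\ell(k)\}\Big).$$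
   Context: For a distribution $\mathcal F$ on $\mathbb R\cup\{\pm\infty\}$, $Q(\alpha;\mathcal F)=\inf\{t:\mathbb P_{T\sim\mathcal F}(T\le t)\ge\alpha\}$; $\delta_v$ is the point mass at $v$. *)

From HB Require Import structures.
From mathcomp Require Import all_boot all_order all_algebra.
From mathcomp Require Import all_classical all_reals all_analysis.
Set Implicit Arguments. Unset Strict Implicit. Unset Printing Implicit Defensive.
Import Order.TTheory GRing.Theory Num.Theory.
Local Open Scope classical_set_scope.
Local Open Scope ring_scope.

(* Indices are 1-based nats, matching the paper: calibration points 1..n,
   test point n+1. *)

Section Defs.
Variables (R : realType) (p n : nat).
Variables (H : 'rV[R]_p -> 'rV[R]_p -> R) (X : nat -> 'rV[R]_p) (V : nat -> R).

(* A finitely supported distribution on R ∪ {±oo}: list of (weight, atom). *)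
Definition cdf (F : seq (R * \bar R)) (t : \bar R) : R :=
  \sum_(wa <- F | (wa.2 <= t)%E) wa.1.

Definition Qtl (a : R) (F : seq (R * \bar R)) : \bar R :=
  ereal_inf [set t : \bar R | a <= cdf F t].

Definition Hm (i j : nat) : R := H (X i) (X j).

Definition pH (i j : nat) : R := Hm i j / \sum_(1 <= k < n.+2) Hm i k.

Definition Fi (i : nat) (v : \bar R) : seq (R * \bar R) :=
  [seq (pH i j, (V j)%:E) | j <- iota 1 n] ++ [:: (pH i n.+1, v)].

Definition Fhat : seq (R * \bar R) :=
  [seq (pH n.+1 j, (V j)%:E) | j <- iota 1 n] ++ [:: (pH n.+1 n.+1, +oo%E)].

Definition Gamma : set R :=
  [set g | exists i : nat, (1 <= i <= n.+1)%N /\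
     exists I : nat -> bool, g = \sum_(1 <= k < n.+2 | I k) pH i k].

Definition Vv (v : R) (i : nat) : R := if i == n.+1 then v else V i.

Definition cover_cond (alpha a : R) (v : R) : Prop :=
  alpha <= (n.+1)%:R^-1 *
    (\sum_(1 <= i < n.+2) (((Vv v i)%:E <= Qtl a (Fi i v%:E))%E : nat))%:R.

Definition is_alpha_tilde (alpha : R) (v : R) (a : R) : Prop :=
  Gamma a /\ cover_cond alpha a v /\
  (forall b, Gamma b -> cover_cond alpha b v -> a <= b).

Definition CV (alpha : R) : set R :=
  [set v : R | exists a, is_alpha_tilde alpha v a /\ (v%:E <= Qtl a Fhat)%E].

Definition Vbar (i : nat) : \bar R :=
  if i == 0%N then -oo%E else if (i <= n)%N then (V i)%:E else +oo%E.

Definition ell (i : nat) : nat :=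
  \max_(1 <= i' < n.+1 | ((V i')%:E < Vbar i)%E) i'.

Definition theta (i : nat) : R := \sum_(1 <= j < (ell i).+1) pH i j.
Definition thetat (i : nat) : R := \sum_(1 <= j < (ell i).+1) pH n.+1 j.

Definition Sk (k : nat) : R :=
  (n.+1)%:R^-1 *
    (\sum_(1 <= i < n.+1)
        (((V i)%:E <= Qtl (thetat k) (Fi i (Vbar (ell k))))%E : nat))%:R.

Definition A1 (i : nat) : bool := pH i n.+1 + theta i < thetat i.
Definition A2 (i : nat) : bool := thetat i <= theta i.
Definition A3 (i : nat) : bool := (thetat i <= pH i n.+1 + theta i) && (theta i < thetat i).

End Defs.

From Pilot Require Import Defs.
From mathcomp Require Import all_boot all_order all_algebra.
From mathcomp Require Import all_classical all_reals all_analysis.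
From mathcomp Require Import lra.
Set Implicit Arguments. Unset Strict Implicit. Unset Printing Implicit Defensive.
Import Order.TTheory GRing.Theory Num.Theory.
Import numFieldTopology.Exports numFieldNormedType.Exports.
Local Open Scope classical_set_scope.
Local Open Scope ring_scope.

(* For a finitely supported F, x <= Q(a; F) iff the F-mass strictly below x
   is < a.  So the coverage count of level a is nondecreasing in a, and its
   (n+1)-st term says exactly that v <= Q(a; \hat F), i.e. that a exceeds the
   \hat F-mass m(v) strictly below v.  As m(v) lies in the finite set Gamma,
   v is in C_V(X_{n+1}) iff the coverage condition fails at level m(v), i.e. iff
   the number T(v) of calibration points covered at level m(v) is below
   (n+1) alpha.  These counts depend on v only through which V_j lie below v:
   comparing the patterns gives T(v) <= (n+1) S(k) when v < \bar V_k, and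
   T(v) >= (n+1) S(k) for some k > k* when v > \bar V_{k*}.  Hence C_V contains
   the open ray below \bar V_{k*} and lies in the closed one.
   For the second part, V_i <= Q(\tilde\theta_k; \hat F_i(\bar V_{\ell(k)}))
   iff \theta_i + p_{i,n+1} 1{\ell(k) <= \ell(i)} < \tilde\theta_k, and on each
   class A_j the monotonicity of \tilde\theta in \ell settles the indicator. *)

Lemma ler_sum_pred (R : numDomainType) (I : eqType) (r : seq I) (P Q : pred I)
    (f : I -> R) :
  (forall i, i \in r -> 0 <= f i) -> (forall i, i \in r -> P i -> Q i) ->
  \sum_(i <- r | P i) f i <= \sum_(i <- r | Q i) f i.
Proof.
move=> f0 PQ; rewrite big_mkcond [leRHS]big_mkcond !big_seq.
apply: ler_sum => i ri; case: ifP => [/(PQ i ri) -> //|_].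
by case: ifP => // _; exact: f0.
Qed.

Lemma ler_sum_prefix (R : numDomainType) (f : nat -> R) a b :
  (forall j, 0 <= f j) -> (a <= b)%N ->
  \sum_(1 <= j < a.+1) f j <= \sum_(1 <= j < b.+1) f j.
Proof.
move=> f_ge0 le_ab; rewrite [leRHS](@big_cat_nat _ _ _ a.+1) //=.
by rewrite lerDl sumr_ge0.
Qed.

Lemma ex_arg_min (T : finType) (R : realDomainType) (f : T -> R)
    (P : R -> Prop) (x0 : T) :
  P (f x0) -> exists2 x, P (f x) & forall y, P (f y) -> f x <= f y.
Proof.
move=> Px0; have [x /asboolP Px min_x] := arg_minP f (P := fun y => `[< P (f y) >]) (asboolT Px0).
by exists x => // y /asboolP; exact: min_x.
Qed.

Lemma closure_ereal_ray (R : realType) (c : \bar R) (A : set R) :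
  [set x : R | (x%:E < c)%E] `<=` A -> A `<=` [set x : R | (x%:E <= c)%E] ->
  closure A = [set x : R | (x%:E <= c)%E].
Proof.
case: c => [r| |] ltA Ale.
- have le_r : [set x : R | (x%:E <= r%:E)%E] = [set x | x <= r].
    by apply/seteqP; split=> x /=; rewrite lee_fin.
  rewrite le_r; apply/seteqP; split; last first.
    by rewrite -closure_lt; apply: closureS => x /= lt_xr; apply: ltA; rewrite /= lte_fin.
  have /closure_id -> : closed [set x : R | x <= r].
    by rewrite -closure_lt; exact: closed_closure.
  by apply: closureS; rewrite -le_r.
- have -> : A = setT by apply/seteqP; split=> // x _; apply: ltA; exact: ltry.
  by rewrite closureT; apply/seteqP; split=> // x _; exact: leey.
- have -> : A = set0 by apply/seteqP; split=> // x /Ale; rewrite /= leeNy_eq.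
  by rewrite closure0; apply/seteqP; split=> // x; rewrite /= leeNy_eq.
Qed.

(* [ti], [tt], [l], [L] stand for [thetat i], [thetat k], [ell i], [ell k];
   the three guards on the right are the classes [A1], [A2], [A3]. *)
Lemma lt_add_indicatorE (R : realDomainType) (th q ti tt : R) (l L : nat) :
  0 <= q -> ((L <= l)%N -> tt <= ti) -> ((l < L)%N -> ti <= tt) ->
  ((th + (if (L <= l)%N then q else 0) < tt)%R : nat) =
  ((if (q + th < ti)%R then ((th + q < tt)%R : nat) else 0) +
   (if (ti <= th)%R then ((th < tt)%R : nat) else 0) +
   (if ((ti <= q + th) && (th < ti))%R then ((l < L) : nat) else 0))%N.
Proof.
move=> q_ge0 tt_le ti_le; case: (leqP L l) => [/tt_le|/ti_le] {tt_le ti_le} le_t;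
  rewrite ?addr0;
  have [?|?] := ltrP (q + th) ti; have [?|?] := ltrP th ti;
  have [?|?] := ltrP (th + q) tt; have [?|?] := ltrP th tt => //=; exfalso; lra.
Qed.

Section Quantile.
Context {R : realType}.
Implicit Types (F : seq (R * \bar R)) (a b w x : R).

Definition cdf_lt F (t : \bar R) : R := \sum_(wa <- F | (wa.2 < t)%E) wa.1.

Lemma cdf_left_attained F x :
  exists2 t, (t < x%:E)%E & Defs.cdf F t = cdf_lt F x%:E.
Proof.
pose t := \big[Order.max/-oo%E]_(wa <- F | (wa.2 < x%:E)%E) wa.2.
have lt_tx : (t < x%:E)%E.
  apply: (big_ind (fun s => s < x%:E)%E) => [|s s' lt_s lt_s'|//]; first exact: ltNyr.
  by rewrite gt_max lt_s lt_s'.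
exists t => //; rewrite /Defs.cdf /cdf_lt big_seq_cond [RHS]big_seq_cond.
apply: eq_bigl => wa; case: (boolP (wa \in F)) => //= waF.
apply/idP/idP => [le_t|lt_x]; first exact: le_lt_trans le_t lt_tx.
exact: (le_bigmax_seq _ _ _ _ waF lt_x).
Qed.

Lemma lee_Qtl F a x : (forall wa, wa \in F -> 0 <= wa.1) ->
  (x%:E <= Qtl a F)%E = (cdf_lt F x%:E < a).
Proof.
move=> F_ge0; apply/idP/idP => [le_xQ|lt_a].
- rewrite ltNge; apply/negP => le_a.
  have [t lt_tx cdf_t] := cdf_left_attained F x.
  have : (Qtl a F <= t)%E by apply: ereal_inf_lbound; rewrite /= cdf_t.
  by move=> /(le_trans le_xQ) /(lt_le_trans lt_tx); rewrite ltxx.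
- apply/ereal_infP => t /= le_a; rewrite leNgt; apply/negP => lt_tx.
  suff : Defs.cdf F t <= cdf_lt F x%:E by move=> /(le_trans le_a) /(lt_le_trans lt_a); rewrite ltxx.
  by apply: ler_sum_pred => // wa _ /le_lt_trans; apply.
Qed.

Lemma le_Qtl F a b : a <= b -> (Qtl a F <= Qtl b F)%E.
Proof. by move=> le_ab; apply: le_ereal_inf => t /= /(le_trans le_ab). Qed.

Lemma lee_Qtl1 F w x : (forall wa, wa \in F -> 0 <= wa.1) ->
  \sum_(wa <- F) wa.1 = 1 -> (w, x%:E) \in F -> 0 < w -> (x%:E <= Qtl 1 F)%E.
Proof.
move=> F_ge0 F1 atom w_gt0; rewrite lee_Qtl //.
have rest_ge0 : 0 <= \sum_(wa <- rem (w, x%:E) F | ~~ (wa.2 < x%:E)%E) wa.1.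
  by rewrite big_seq_cond; apply: sumr_ge0 => wa /andP[/mem_rem /F_ge0].
move: F1; rewrite (bigID (fun wa => wa.2 < x%:E)%E) /= [X in _ + X](big_rem _ atom) /=.
rewrite ltxx /= -/(cdf_lt F x%:E); lra.
Qed.

End Quantile.

Section ConformalSet.
Variables (R : realType) (p n : nat) (H : 'rV[R]_p -> 'rV[R]_p -> R)
  (X : nat -> 'rV[R]_p) (V : nat -> R).
Hypotheses (H01 : forall x y, 0 <= H x y <= 1) (Hdiag : forall x, H x x = 1)
  (Vsorted : forall i j, (1 <= i)%N -> (i <= j)%N -> (j <= n)%N -> V i <= V j).

Local Notation ph := (pH n H X).
Local Notation Fcal := (Fi n H X V).
Local Notation Vb := (Vbar n V).
Local Notation ellV := (ell n V).

Lemma Hm_ge0 i j : 0 <= Hm H X i j.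
Proof. by case/andP: (H01 (X i) (X j)). Qed.

Lemma pH_ge0 i j : 0 <= ph i j.
Proof. by rewrite /pH divr_ge0 ?sumr_ge0 // => *; exact: Hm_ge0. Qed.

Lemma Hm_row_gt0 i : (1 <= i <= n.+1)%N -> 0 < \sum_(1 <= k < n.+2) Hm H X i k.
Proof.
move=> i_in; rewrite (bigD1_seq i) ?iota_uniq ?mem_index_iota ?ltnS //= {1}/Hm Hdiag.
by rewrite (lt_le_trans ltr01) // lerDl sumr_ge0 // => *; exact: Hm_ge0.
Qed.

Lemma pH_sum i : (1 <= i <= n.+1)%N -> \sum_(1 <= j < n.+2) ph i j = 1.
Proof. by move=> i_in; rewrite /pH -mulr_suml divff // gt_eqF // Hm_row_gt0. Qed.

Lemma pH_diag_gt0 i : (1 <= i <= n.+1)%N -> 0 < ph i i.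
Proof. by move=> i_in; rewrite /pH {1}/Hm Hdiag divr_gt0 // Hm_row_gt0. Qed.

Definition below (w : \bar R) : nat := \max_(1 <= i < n.+1 | ((V i)%:E < w)%E) i.

Lemma ellE k : ellV k = below (Vb k).
Proof. by []. Qed.

Lemma below_le w : (below w <= n)%N.
Proof. by apply/bigmax_leqP_seq => i; rewrite mem_index_iota ltnS => /andP[]. Qed.

Lemma lt_below w j : (1 <= j <= n)%N -> ((V j)%:E < w)%E = (j <= below w)%N.
Proof.
move=> /andP[j_gt0 le_jn]; apply/idP/idP => [lt_jw|].
  by apply: (leq_bigmax_seq (F := id)); rewrite ?mem_index_iota ?j_gt0.
apply: contraLR; rewrite -leNgt -ltnNge => le_wj.
suff : (below w <= j.-1)%N by rewrite -ltnS prednK.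
apply/bigmax_leqP_seq => i; rewrite mem_index_iota ltnS => /andP[_ le_in] lt_iw.
rewrite -ltnS prednK // ltnNge; apply/negP => le_ji.
by have := lt_le_trans lt_iw le_wj; rewrite lte_fin ltNge Vsorted.
Qed.

Lemma below_mono w w' : (w <= w')%E -> (below w <= below w')%N.
Proof.
move=> le_ww'; apply/bigmax_leqP_seq => i; rewrite mem_index_iota ltnS => i_in lt_iw.
by rewrite -lt_below // (lt_le_trans lt_iw).
Qed.

Lemma sum_below (f : nat -> R) w :
  \sum_(1 <= j < n.+1 | ((V j)%:E < w)%E) f j = \sum_(1 <= j < (below w).+1) f j.
Proof.
rewrite (big_nat_widen _ _ _ _ _ (_ : (below w).+1 <= n.+1)%N) ?ltnS ?below_le //.
rewrite [LHS]big_nat_cond [RHS]big_nat_cond; apply: eq_bigl => j.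
by case: (boolP (1 <= j < n.+1)%N) => //= j_in; rewrite ltnS -lt_below.
Qed.

Lemma Vbar_in i : (1 <= i <= n)%N -> Vb i = (V i)%:E.
Proof. by case: i => // i /andP[_ le_in]; rewrite /Vbar /= le_in. Qed.

Lemma ell_in i : (1 <= i <= n)%N -> ellV i = below (V i)%:E.
Proof. by move=> i_in; rewrite ellE Vbar_in. Qed.

Lemma ell_lt k : (0 < k <= n.+1)%N -> (ellV k < k)%N.
Proof.
case/andP=> k_gt0; rewrite leq_eqVlt ltnS => /orP[/eqP-> | le_kn].
  by rewrite ltnS below_le.
by rewrite ell_in ?k_gt0 // ltnNge -lt_below ?k_gt0 // ltxx.
Qed.

Lemma lt_Vbar_below L w : (L <= n)%N -> (-oo < w)%E ->
  (Vb L < w)%E = (L <= below w)%N.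
Proof. by case: L => [_ ->|L le_Ln _] //; rewrite Vbar_in ?lt_below. Qed.

Definition mass_hat (v : R) : R := \sum_(1 <= j < (below v%:E).+1) ph n.+1 j.

Lemma Fi_ge0 i w wa : wa \in Fcal i w -> 0 <= wa.1.
Proof. by rewrite mem_cat => /orP[/mapP[j _ ->]|/[!inE]/eqP->]; exact: pH_ge0. Qed.

Lemma Fhat_ge0 wa : wa \in Fhat n H X V -> 0 <= wa.1.
Proof. by rewrite mem_cat => /orP[/mapP[j _ ->]|/[!inE]/eqP->]; exact: pH_ge0. Qed.

Lemma Fi_total i w : (1 <= i <= n.+1)%N -> \sum_(wa <- Fcal i w) wa.1 = 1.
Proof.
move=> i_in; rewrite -(pH_sum i_in) big_nat_recr //= /Fi big_cat big_map big_seq1 /=.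
by rewrite /index_iota subSS subn0.
Qed.

Lemma mem_diag_Fi i v : (1 <= i <= n.+1)%N ->
  (ph i i, (Vv n V v i)%:E) \in Fcal i v%:E.
Proof.
rewrite /Vv /Fi mem_cat; case: eqP => [-> _|/eqP ne_i /andP[i_gt0 le_i]].
  by rewrite mem_seq1 eqxx orbT.
by rewrite (map_f (fun j => (ph i j, (V j)%:E))) // mem_iota i_gt0 add1n ltn_neqAle ne_i.
Qed.

Lemma cdf_lt_Fi i w x : cdf_lt (Fcal i w) x%:E =
  \sum_(1 <= j < (below x%:E).+1) ph i j + (if (w < x%:E)%E then ph i n.+1 else 0).
Proof.
rewrite /cdf_lt /Fi big_cat big_map big_cons big_nil /= addr0 -sum_below.
by rewrite /index_iota subSS subn0.
Qed.

Lemma lee_Qtl_Fi i w a : (1 <= i <= n)%N ->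
  ((V i)%:E <= Qtl a (Fcal i w))%E =
  (theta n H X V i + (if (w < (V i)%:E)%E then ph i n.+1 else 0) < a).
Proof.
by move=> i_in; rewrite lee_Qtl ?cdf_lt_Fi /theta ?ell_in //; exact: Fi_ge0.
Qed.

Lemma lee_Qtl_Fhat v a : (v%:E <= Qtl a (Fhat n H X V))%E = (mass_hat v < a).
Proof.
rewrite lee_Qtl; last exact: Fhat_ge0.
rewrite /cdf_lt /Fhat big_cat big_map big_cons big_nil [(+oo < _)%E]ltNge leey /=.
by rewrite addr0 /mass_hat -sum_below /index_iota subSS subn0.
Qed.

Definition share (m : nat) : R := (n.+1)%:R^-1 * m%:R.

Lemma ler_share m m' : (m <= m')%N -> share m <= share m'.
Proof. by move=> le_mm'; rewrite ler_wpM2l ?invr_ge0 ?ler_nat. Qed.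

Definition cal_count (a : R) (w : \bar R) : nat :=
  \sum_(1 <= i < n.+1) (((V i)%:E <= Qtl a (Fcal i w))%E : nat).

Definition Sk_count (k : nat) : nat := cal_count (thetat n H X V k) (Vb (ellV k)).

Lemma SkE k : Sk n H X V k = share (Sk_count k).
Proof. by []. Qed.

Lemma cal_count_le a b w w' : a <= b ->
  (forall i, (1 <= i <= n)%N -> (w' < (V i)%:E)%E -> (w < (V i)%:E)%E) ->
  (cal_count a w <= cal_count b w')%N.
Proof.
move=> le_ab ww'; rewrite /cal_count big_nat_cond [leqRHS]big_nat_cond.
apply: leq_sum => i /andP[i_in _]; rewrite !lee_Qtl_Fi //.
case: (boolP (_ < a)) => // lt_a; rewrite (le_lt_trans _ (lt_le_trans lt_a le_ab)) //.
rewrite lerD2l; case: ifP => [/ww'-> // | _].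
by case: ifP => // _; exact: pH_ge0.
Qed.

Definition cover_count (a v : R) : nat :=
  \sum_(1 <= i < n.+2) (((Vv n V v i)%:E <= Qtl a (Fcal i v%:E))%E : nat).

Lemma cover_condE alpha a v :
  cover_cond n H X V alpha a v = (alpha <= share (cover_count a v)).
Proof. by []. Qed.

Lemma cover_count_le a b v : a <= b -> (cover_count a v <= cover_count b v)%N.
Proof.
move=> le_ab; apply: leq_sum => i _; case: (boolP (_ <= _)%E) => // le_Q.
by rewrite (le_trans le_Q) ?le_Qtl.
Qed.

Lemma cover_countE a v : cover_count a v = (cal_count a v%:E + ((mass_hat v < a)%R : nat))%N.
Proof.
rewrite /cover_count big_nat_recr //=; congr addn.
  by apply: eq_big_nat => i /andP[_ lt_in]; rewrite /Vv ltn_eqF.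
by rewrite /Vv eqxx lee_Qtl ?cdf_lt_Fi ?ltxx ?addr0 //; exact: Fi_ge0.
Qed.

Lemma cover_count1 v : cover_count 1 v = n.+1.
Proof.
rewrite /cover_count big_nat_cond (eq_bigr (fun=> 1%N)) -?big_nat_cond.
  by rewrite sum_nat_const_nat subSS subn0 muln1.
move=> i /andP[i_in _]; suff -> : ((Vv n V v i)%:E <= Qtl 1 (Fcal i v%:E))%E by [].
apply: (lee_Qtl1 _ _ (mem_diag_Fi v i_in) (pH_diag_gt0 i_in)); [exact: Fi_ge0 | exact: Fi_total].
Qed.

Lemma Gamma1 : Gamma n H X 1.
Proof.
exists n.+1; split; first by rewrite leqnn.
by exists (fun _ => true); rewrite pH_sum // leqnn.
Qed.

Lemma Gamma_mass_hat v : Gamma n H X (mass_hat v).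
Proof.
exists n.+1; split; first by rewrite leqnn.
exists (fun k => k <= below v%:E)%N.
have le_below : ((below v%:E).+1 <= n.+2)%N by rewrite ltnS leqW ?below_le.
by rewrite /mass_hat (big_nat_widen _ _ _ _ _ le_below).
Qed.

(* Gamma is the image of this finite type: row [i] is stored as [i - 1] and
   the index set [I] by its indicator on ['I_n.+2]. *)
Definition gamma_of (x : 'I_n.+1 * {ffun 'I_n.+2 -> bool}) : R :=
  \sum_(1 <= k < n.+2 | x.2 (inord k)) ph x.1.+1 k.

Lemma Gamma_gamma_of x : Gamma n H X (gamma_of x).
Proof. by exists x.1.+1; split; [rewrite ltnS ltn_ord | exists (fun k => x.2 (inord k))]. Qed.

Lemma gamma_of_onto b : Gamma n H X b -> exists x, b = gamma_of x.
Proof.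
move=> [i [/andP[i_gt0 le_i] [I ->]]].
have lt_i : (i.-1 < n.+1)%N by rewrite prednK.
exists (Ordinal lt_i, [ffun k : 'I_n.+2 => I k]); rewrite /gamma_of /= prednK //.
rewrite big_nat_cond [RHS]big_nat_cond; apply: eq_bigl => k.
by case: (boolP (1 <= k < n.+2)%N) => //= /andP[_ lt_k]; rewrite ffunE inordK.
Qed.

Lemma alpha_tilde_exists alpha v : alpha <= 1 ->
  exists a, is_alpha_tilde n H X V alpha v a.
Proof.
move=> alpha_le1; have [x1 e1] := gamma_of_onto Gamma1.
have cover1 : cover_cond n H X V alpha (gamma_of x1) v.
  by rewrite cover_condE -e1 cover_count1 /share mulVf ?pnatr_eq0.
have [x cover_x min_x] := ex_arg_min (P := fun a => cover_cond n H X V alpha a v) cover1.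
exists (gamma_of x); split; first exact: Gamma_gamma_of.
by split=> // b /gamma_of_onto[y ->]; exact: min_x.
Qed.

Lemma CV_iff alpha v : alpha <= 1 ->
  CV n H X V alpha v <-> ~ cover_cond n H X V alpha (mass_hat v) v.
Proof.
move=> alpha_le1; split.
- move=> [a [[_ [_ min_a]]]]; rewrite lee_Qtl_Fhat => lt_a cover_hat.
  by have := min_a _ (Gamma_mass_hat v) cover_hat; rewrite leNgt lt_a.
- move=> not_cover; have [a tilde_a] := alpha_tilde_exists v alpha_le1.
  exists a; split=> //; rewrite lee_Qtl_Fhat ltNge; apply/negP => le_a.
  apply: not_cover; case: tilde_a => _ [+ _]; rewrite !cover_condE => cover_a.
  by apply: le_trans cover_a _; apply: ler_share; exact: cover_count_le.
Qed.

Definition hat_count (v : R) : nat := cal_count (mass_hat v) v%:E.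

Lemma CV_share alpha v : alpha <= 1 ->
  CV n H X V alpha v <-> share (hat_count v) < alpha.
Proof.
move=> alpha_le1; apply: (iff_trans (CV_iff v alpha_le1)).
by rewrite cover_condE cover_countE ltxx addn0 ltNge; split=> /negP.
Qed.

Lemma hat_count_le_Sk_count v k : (v%:E < Vb k)%E -> (hat_count v <= Sk_count k)%N.
Proof.
move=> lt_vk; apply: cal_count_le => [|i i_in].
  rewrite /mass_hat /thetat ellE.
  by apply: ler_sum_prefix (below_mono (ltW lt_vk)) => j; exact: pH_ge0.
rewrite lt_Vbar_below ?below_le ?ltNyr // -ell_in //; apply: contraLR.
rewrite -leNgt -ltnNge => le_iv.
have i_le : (0 < i <= n.+1)%N by case/andP: i_in => -> /leqW.
apply: leq_trans (ell_lt i_le) _.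
by rewrite ellE -lt_below // (le_lt_trans le_iv lt_vk).
Qed.

Lemma Sk_count_le_hat_count v kstar : (0 < kstar)%N -> (Vb kstar < v%:E)%E ->
  exists2 k, (kstar < k <= n.+1)%N & (Sk_count k <= hat_count v)%N.
Proof.
move=> kstar_gt0 lt_kv.
have le_kn : (kstar <= n)%N.
  by move: lt_kv; rewrite /Vbar gtn_eqF //; case: leqP => // _; rewrite ltNge leey.
have kstar_in : (0 < kstar <= n)%N by rewrite kstar_gt0.
set M := below v%:E; have le_Mn : (M <= n)%N := below_le _.
have le_kM : (kstar <= M)%N by rewrite -lt_below // -Vbar_in.
have le_ellM : (ellV M.+1 <= M)%N by rewrite -ltnS ell_lt.
exists M.+1; first by rewrite ltnS le_kM.
apply: cal_count_le => [|i i_in lt_vi].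
  by rewrite /thetat; apply: ler_sum_prefix le_ellM => j; exact: pH_ge0.
rewrite lt_Vbar_below ?ltNyr //; last exact: leq_trans le_ellM le_Mn.
exact: leq_trans le_ellM (below_mono (ltW lt_vi)).
Qed.

Lemma closure_CV alpha kstar : alpha < 1 -> (0 < kstar)%N ->
  Sk n H X V kstar < alpha ->
  (forall k, (kstar < k <= n.+1)%N -> ~ Sk n H X V k < alpha) ->
  [set v : R | (v%:E <= Vb kstar)%E] = closure (CV n H X V alpha).
Proof.
move=> alpha_lt1 kstar_gt0 Sk_lt max_kstar; have alpha_le1 := ltW alpha_lt1.
symmetry; apply: closure_ereal_ray => v /=.
  move=> lt_vk; apply/CV_share => //; apply: le_lt_trans Sk_lt.
  by rewrite SkE; apply: ler_share; exact: hat_count_le_Sk_count.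
move=> /CV_share-/(_ alpha_le1) CV_lt; rewrite leNgt; apply/negP => lt_kv.
have [k k_gt Sk_le] := Sk_count_le_hat_count kstar_gt0 lt_kv.
by apply: (max_kstar k k_gt); apply: le_lt_trans CV_lt; rewrite SkE ler_share.
Qed.

Lemma Sk_partition k :
  Sk n H X V k =
  (n.+1)%:R^-1 *
    ((\sum_(1 <= i < n.+1 | A1 n H X V i)
        ((theta n H X V i + pH n H X i n.+1 < thetat n H X V k)%R : nat))%:R
   + (\sum_(1 <= i < n.+1 | A2 n H X V i)
        ((theta n H X V i < thetat n H X V k)%R : nat))%:R
   + (\sum_(1 <= i < n.+1 | A3 n H X V i)
        ((ell n V i < ell n V k)%N : nat))%:R).
Proof.
rewrite /Sk -!natrD; congr (_ * _%:R).
rewrite [\sum_(1 <= i < n.+1 | A1 _ _ _ _ i) _]big_mkcond.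
rewrite [\sum_(1 <= i < n.+1 | A2 _ _ _ _ i) _]big_mkcond.
rewrite [\sum_(1 <= i < n.+1 | A3 _ _ _ _ i) _]big_mkcond -!big_split /=.
apply: eq_big_nat => i /andP[i_gt0 lt_in]; have i_in : (0 < i <= n)%N by rewrite i_gt0.
rewrite lee_Qtl_Fi // lt_Vbar_below ?below_le ?ltNyr // -ell_in //.
apply: lt_add_indicatorE; first exact: pH_ge0.
  by move=> le_ki; rewrite /thetat; apply: ler_sum_prefix le_ki => j; exact: pH_ge0.
by move=> /ltnW le_ik; rewrite /thetat; apply: ler_sum_prefix le_ik => j; exact: pH_ge0.
Qed.

End ConformalSet.

Theorem lemma2 (R : realType) (p n : nat)
  (H : 'rV[R]_p -> 'rV[R]_p -> R) (X : nat -> 'rV[R]_p) (V : nat -> R)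
  (alpha : R)
  (H01 : forall x y, 0 <= H x y <= 1)
  (Hdiag : forall x, H x x = 1)
  (Vsorted : forall i j, (1 <= i)%N -> (i <= j)%N -> (j <= n)%N -> V i <= V j)
  (alpha01 : 0 < alpha < 1) :
  (forall kstar : nat, (1 <= kstar <= n.+1)%N ->
     Sk n H X V kstar < alpha ->
     (forall k : nat, (kstar < k <= n.+1)%N -> ~ (Sk n H X V k < alpha)) ->
     [set v : R | ((v%:E) <= Vbar n V kstar)%E] = closure (CV n H X V alpha))
  /\
  (forall k : nat, (1 <= k <= n.+1)%N ->
     Sk n H X V k =
     (n.+1)%:R^-1 *
       ((\sum_(1 <= i < n.+1 | A1 n H X V i)
           ((theta n H X V i + pH n H X i n.+1 < thetat n H X V k)%R : nat))%:R
      + (\sum_(1 <= i < n.+1 | A2 n H X V i)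
           ((theta n H X V i < thetat n H X V k)%R : nat))%:R
      + (\sum_(1 <= i < n.+1 | A3 n H X V i)
           ((ell n V i < ell n V k)%N : nat))%:R)).
Proof.
split=> [kstar /andP[kstar_gt0 _] | k _]; last exact: Sk_partition.
by apply: closure_CV => //; case/andP: alpha01.
Qed.
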